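(* Fix $0<C<1$ and consider all probability vectors $w=(w_1,\dots,w_k)$ (of any finite length $k$, with $w_i\ge0$ and $\sum_i w_i=1$) satisfying $\sum_i w_i^3=C$. Then the minimum of $\sum_i w_i^4$ over all such vectors is attained by a vector of the form $w_1=\dots=w_{m-1}\ge w_m>0$, where $m$ is the smallest possible length for which a vector of this form satisfies $\sum_i w_i^3=C$. *)

From mathcomp Require Import all_boot all_order all_algebra.
From mathcomp Require Import reals.
Set Implicit Arguments. Unset Strict Implicit. Unset Printing Implicit Defensive.
Import Order.TTheory GRing.Theory Num.Theory.
Local Open Scope ring_scope.

Definition prob_vec (R : realType) (k : nat) (w : 'I_k -> R) : Prop :=
  (forall i, 0 <= w i) /\ \sum_(i < k) w i = 1.

Definition psum (R : realType) (k : nat) (w : 'I_k -> R) (p : nat) : R :=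
  \sum_(i < k) w i ^+ p.

(* w has the form w_1 = ... = w_{m-1} >= w_m > 0 (0-indexed: entries
   0..m-2 are equal, each >= the last entry m-1, which is positive). *)
Definition special_form (R : realType) (m : nat) (w : 'I_m -> R) : Prop :=
  (0 < m)%N /\
  (forall i j : 'I_m, (i < m.-1)%N -> (j < m.-1)%N -> w i = w j) /\
  (forall i j : 'I_m, (i < m.-1)%N -> nat_of_ord j = m.-1 -> w j <= w i) /\
  (forall j : 'I_m, nat_of_ord j = m.-1 -> 0 < w j).

From mathcomp Require Import all_boot all_order all_algebra.
From mathcomp Require Import reals.
From mathcomp Require Import ring lra.
From mathcomp Require Import boolp classical_sets topology normedtype derive realfun.
Import Order.TTheory GRing.Theory Num.Theory.
Import numFieldNormedType.Exports.
Local Open Scope ring_scope.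
Set Implicit Arguments. Unset Strict Implicit.

(* Fix the length k of a competitor v.  By compactness, the fourth-power sum
   attains its minimum on the probability vectors of length k with cube sum C.
   At a minimizer no two entries lie strictly between 0 and the maximal entry x:
   otherwise replace x > y, z > 0 by a nonnegative triple with the same sum and
   cube sum but a smaller fourth-power sum.  With sum and cube sum fixed, the
   fourth-power sum and the product of a triple both increase with
   e2 = xy + yz + zx, and a triple containing 0, or failing that a triple
   (u, u, w) with w <= u, has a smaller product.  So the minimizer has n entries
   a, one entry 0 < b <= a and zeros.  Such parameters with n a + b = 1 are
   determined by C < 1: n is the unique integer with n^2 C < 1 <= (n+1)^2 C, and
   n a^3 + (1 - n a)^3 is increasing in a.  Vectors of the special form are
   exactly those with these parameters and no zero entry, whence both the
   minimality of the length n + 1 and the optimality. *)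

Section ThreePoints.
Variable R : realFieldType.
Implicit Types x y z u v w : R.

Lemma sum3_pow4E x y z :
  3 * (x ^+ 4 + y ^+ 4 + z ^+ 4) =
  3 * (x + y + z) ^+ 4 + 6 * (x * y + y * z + z * x) ^+ 2
  + 4 * (x + y + z) * (x ^+ 3 + y ^+ 3 + z ^+ 3 - (x + y + z) ^+ 3).
Proof. ring. Qed.

Lemma prod3E x y z :
  3 * (x * y * z) = x ^+ 3 + y ^+ 3 + z ^+ 3 - (x + y + z) ^+ 3
                    + 3 * (x + y + z) * (x * y + y * z + z * x).
Proof. ring. Qed.

Lemma sum3_pow4_lt x y z x' y' z' :
  0 <= x' -> 0 <= y' -> 0 <= z' -> 0 < x + y + z ->
  x' + y' + z' = x + y + z -> x' ^+ 3 + y' ^+ 3 + z' ^+ 3 = x ^+ 3 + y ^+ 3 + z ^+ 3 ->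
  x' * y' * z' < x * y * z ->
  x' ^+ 4 + y' ^+ 4 + z' ^+ 4 < x ^+ 4 + y ^+ 4 + z ^+ 4.
Proof.
move=> hx' hy' hz' hs es et ep.
have p4 := sum3_pow4E x y z; have p4' := sum3_pow4E x' y' z'.
have e3 := prod3E x y z; have e3' := prod3E x' y' z'.
rewrite es et in p4' e3'.
set s := x + y + z in hs p4 p4' e3 e3'.
set q := x * y + y * z + z * x in p4 e3.
set q' := x' * y' + y' * z' + z' * x' in p4' e3'.
have hq' : 0 <= q' by rewrite /q'; nra.
have hqq : q' < q.
  have : 0 < s * (q - q') by nra.
  by rewrite pmulr_rgt0 // subr_gt0.
nra.
Qed.

Lemma sum3_cube_bounds x y z : 0 <= x -> 0 <= y -> 0 <= z ->
  (x + y + z) ^+ 3 <= 9 * (x ^+ 3 + y ^+ 3 + z ^+ 3) /\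
  x ^+ 3 + y ^+ 3 + z ^+ 3 <= (x + y + z) ^+ 3.
Proof.
move=> hx hy hz; split.
- have a1 : 0 <= (x + y) * (x - y) ^+ 2 by rewrite mulr_ge0 ?sqr_ge0 //; lra.
  have a2 : 0 <= (y + z) * (y - z) ^+ 2 by rewrite mulr_ge0 ?sqr_ge0 //; lra.
  have a3 : 0 <= (z + x) * (z - x) ^+ 2 by rewrite mulr_ge0 ?sqr_ge0 //; lra.
  have a4 : 0 <= (x + y + z) * ((x - y) ^+ 2 + (y - z) ^+ 2 + (z - x) ^+ 2).
    by rewrite mulr_ge0 ?addr_ge0 ?sqr_ge0.
  lra.
- have -> : (x + y + z) ^+ 3 = x ^+ 3 + y ^+ 3 + z ^+ 3 + 3 * ((x + y) * (y + z) * (z + x)).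
    by ring.
  by rewrite lerDl mulr_ge0 // !mulr_ge0 // addr_ge0.
Qed.

(* The monic cubics with roots x, y, z and u, v, w differ by (e2 - e2')(X - s);
   at X the first is negative and the second is not. *)
Lemma prod3_lt x y z u v w X :
  0 < y -> 0 < z -> y < X -> z < X -> X < x -> 0 <= (X - u) * (X - v) * (X - w) ->
  u + v + w = x + y + z -> u ^+ 3 + v ^+ 3 + w ^+ 3 = x ^+ 3 + y ^+ 3 + z ^+ 3 ->
  u * v * w < x * y * z.
Proof.
move=> hy hz hyX hzX hXx hQ es et.
set s := x + y + z in es.
set q := x * y + y * z + z * x; set q' := u * v + v * w + w * u.
have cubic_diff :
    (X - x) * (X - y) * (X - z) - (X - u) * (X - v) * (X - w) = (q - q') * (X - s).
  have hu : u = s - v - w by lra.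
  have : 3 * ((X - x) * (X - y) * (X - z) - (X - u) * (X - v) * (X - w) - (q - q') * (X - s))
         = u ^+ 3 + v ^+ 3 + w ^+ 3 - (x ^+ 3 + y ^+ 3 + z ^+ 3).
    by rewrite /q' /q hu /s; ring.
  rewrite et subrr; lra.
have e3 := prod3E x y z; have e3' := prod3E u v w.
rewrite es et -/s -/q' in e3'; rewrite -/s -/q in e3.
have hP : (X - x) * (X - y) * (X - z) < 0.
  by rewrite pmulr_llt0 ?subr_gt0 // pmulr_llt0 ?subr_gt0 // subr_lt0.
have hqq : 0 < q - q'.
  have : 0 < (q - q') * (s - X).
    have -> : (q - q') * (s - X) = - ((q - q') * (X - s)) by ring.
    rewrite -cubic_diff oppr_gt0 subr_lt0; exact: lt_le_trans hP hQ.
  by rewrite pmulr_lgt0 // subr_gt0 /s; lra.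
have : 0 < s * (q - q') by rewrite mulr_gt0 // /s; lra.
nra.
Qed.

End ThreePoints.

Lemma poly_ivt_value (R : rcfType) (p : {poly R}) a b v :
  a <= b -> p.[a] <= v <= p.[b] -> exists2 x, a <= x <= b & p.[x] = v.
Proof.
move=> hab /andP[hpa hpb].
have [|x hx] := @poly_ivt R (p - v%:P) a b hab.
  by rewrite !hornerE subr_le0 hpa subr_ge0 hpb.
by rewrite rootE !hornerE subr_eq0 => /eqP; exists x.
Qed.

Section TwoAndThreePoints.
Variable R : rcfType.
Implicit Types s t x y z u : R.

Lemma two_point_cube_sum s t : 0 < s -> s ^+ 3 <= 4 * t -> t <= s ^+ 3 ->
  exists x y, [/\ 0 <= x, 0 <= y, x + y = s & x ^+ 3 + y ^+ 3 = t].
Proof.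
move=> hs ht4 hts.
pose r := Num.sqrt ((4 * t - s ^+ 3) / (3 * s)).
have hr2 : 3 * s * r ^+ 2 = 4 * t - s ^+ 3.
  rewrite sqr_sqrtr; first by field; lra.
  by rewrite divr_ge0 // ?subr_ge0; lra.
have hr0 : 0 <= r := sqrtr_ge0 _.
have hrs : r <= s.
  have : 3 * s * (r ^+ 2 - s ^+ 2) <= 0 by lra.
  rewrite pmulr_rle0 ?subr_le0 ?ler_sqr ?nnegrE //; lra.
by exists ((s + r) / 2), ((s - r) / 2); split; [lra | lra | lra | nra].
Qed.

Lemma double_point_cube_sum s t : 0 < s -> s ^+ 3 <= 9 * t -> t <= s ^+ 3 / 4 ->
  exists2 u, s / 3 <= u <= s / 2 & 2 * u ^+ 3 + (s - 2 * u) ^+ 3 = t.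
Proof.
move=> hs ht9 ht4.
pose p := 2%:P * 'X ^+ 3 + (s%:P - 2%:P * 'X) ^+ 3.
have hp u : p.[u] = 2 * u ^+ 3 + (s - 2 * u) ^+ 3 by rewrite !hornerE.
have hp3 : p.[s / 3] = s ^+ 3 / 9 by rewrite hp; field.
have hp2 : p.[s / 2] = s ^+ 3 / 4 by rewrite hp; field.
have [||u hu <-] := @poly_ivt_value R p (s / 3) (s / 2) t.
- lra.
- by rewrite hp3 hp2; apply/andP; split; lra.
- by exists u; rewrite // hp.
Qed.

Lemma three_point_improve x y z : 0 < y -> 0 < z -> y < x -> z < x ->
  exists x' y' z', [/\ 0 <= x' /\ 0 <= y' /\ 0 <= z', x' + y' + z' = x + y + z,
    x' ^+ 3 + y' ^+ 3 + z' ^+ 3 = x ^+ 3 + y ^+ 3 + z ^+ 3 &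
    x' ^+ 4 + y' ^+ 4 + z' ^+ 4 < x ^+ 4 + y ^+ 4 + z ^+ 4].
Proof.
move=> hy hz hyx hzx.
have hs : 0 < x + y + z by lra.
have hxyz : 0 < x * y * z by rewrite !mulr_gt0 //; lra.
have [x0 y0 z0] : [/\ 0 <= x, 0 <= y & 0 <= z] by split; lra.
have [ht9 hts] := sum3_cube_bounds x0 y0 z0.
set s := x + y + z in hs ht9 hts *; set t := x ^+ 3 + y ^+ 3 + z ^+ 3 in ht9 hts *.
have [ht4 | ht4] := leP (s ^+ 3) (4 * t).
- have [x' [y' [hx' hy' es et]]] := two_point_cube_sum hs ht4 hts.
  have es' : x' + y' + 0 = s by rewrite addr0.
  have et' : x' ^+ 3 + y' ^+ 3 + 0 ^+ 3 = t by rewrite expr0n addr0.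
  exists x', y', 0; split => //.
  by apply: sum3_pow4_lt; rewrite // ?mulr0.
- have [|u /andP[hu3 hu2] et] := @double_point_cube_sum s t hs ht9; first lra.
  have es : u + u + (s - 2 * u) = s by ring.
  have et' : u ^+ 3 + u ^+ 3 + (s - 2 * u) ^+ 3 = t by rewrite -et; ring.
  exists u, u, (s - 2 * u); split => //; first by split; [|split]; lra.
  apply: sum3_pow4_lt => //; try lra.
  pose m := Num.max y (Num.max z (s - 2 * u)).
  have hm : [/\ y <= m, z <= m & s - 2 * u <= m].
    by rewrite /m !le_max !lexx !orbT.
  have hmx : m < x by rewrite /m !gt_max hyx hzx /=; rewrite /s in hu3 *; lra.
  case: hm => hym hzm hwm.
  apply: (@prod3_lt _ x y z u u (s - 2 * u) ((x + m) / 2)) => //; try lra.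
  by rewrite mulr_ge0 ?subr_ge0 -?expr2 ?sqr_ge0 //; lra.
Qed.

End TwoAndThreePoints.

Section Levels.
Variable R : realFieldType.
Implicit Types a b C : R.

Lemma level_cube_sum_ge n a b : 0 < b <= a -> n%:R * a + b = 1 ->
  1 <= n.+1%:R ^+ 2 * (n%:R * a ^+ 3 + b ^+ 3).
Proof.
move=> /andP[hb hba] h1; rewrite -natr1; set N := n%:R in h1 *.
have hN : 0 <= N := ler0n _ n.
have : 0 <= N * (a - b) ^+ 2 * (N * (2 * a + b) + a + 2 * b).
  by rewrite !mulr_ge0 ?sqr_ge0 //; nra.
have -> : (N + 1) ^+ 2 * (N * a ^+ 3 + b ^+ 3) =
    (N * a + b) ^+ 3 + N * (a - b) ^+ 2 * (N * (2 * a + b) + a + 2 * b) by ring.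
rewrite h1 expr1n; lra.
Qed.

Lemma level_cube_sum_lt n a b : 0 < b <= a -> n%:R * a + b = 1 ->
  n%:R ^+ 2 * (n%:R * a ^+ 3 + b ^+ 3) < 1.
Proof.
move=> /andP[hb hba] h1; set N := n%:R in h1 *.
have hN : 0 <= N := ler0n _ n.
have -> : N ^+ 2 * (N * a ^+ 3 + b ^+ 3) = (N * a + b) ^+ 3
   - (3 * N ^+ 2 * (b * ((a - b) * (a + b))) + 2 * N ^+ 2 * b ^+ 3
      + 3 * N * a * b ^+ 2 + b ^+ 3) by ring.
rewrite h1 expr1n gtrDl oppr_lt0.
have : 0 < b ^+ 3 := exprn_gt0 3 hb.
have : 0 <= 3 * N ^+ 2 * (b * ((a - b) * (a + b))) by rewrite !mulr_ge0 ?sqr_ge0 //; lra.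
have : 0 <= 2 * N ^+ 2 * b ^+ 3 by rewrite !mulr_ge0 ?sqr_ge0 ?exprn_ge0 //; lra.
have : 0 <= 3 * N * a * b ^+ 2 by rewrite !mulr_ge0 ?sqr_ge0 //; lra.
lra.
Qed.

Lemma level_unique C n n' : 0 < C ->
  n%:R ^+ 2 * C < 1 <= n.+1%:R ^+ 2 * C -> n'%:R ^+ 2 * C < 1 <= n'.+1%:R ^+ 2 * C ->
  n = n'.
Proof.
move=> C0; wlog lenn' : n n' / (n <= n')%N => [hwlog hn hn'|].
  have [h|/ltnW h] := leqP n n'; first exact: hwlog n n' h hn hn'.
  exact/esym/(hwlog n' n h hn' hn).
move=> /andP[_ hn] /andP[hn' _]; apply/eqP; rewrite eqn_leq lenn' leqNgt.
apply/negP => ltnn'.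
have : n.+1%:R ^+ 2 * C <= n'%:R ^+ 2 * C.
  by rewrite ler_pM2r // lerXn2r ?nnegrE ?ler0n // ler_nat.
lra.
Qed.

Lemma level_cube_sum_increasing n a b a' b' : (0 < n)%N ->
  0 < b <= a -> 0 < b' <= a' -> n%:R * a + b = 1 -> n%:R * a' + b' = 1 -> a < a' ->
  n%:R * a ^+ 3 + b ^+ 3 < n%:R * a' ^+ 3 + b' ^+ 3.
Proof.
move=> n0 /andP[hb hba] /andP[hb' hba'] h1 h1' haa; set N := n%:R in h1 h1' *.
have hN : 0 < N by rewrite ltr0n.
have hbb : b' < b by nra.
have -> : N * a' ^+ 3 + b' ^+ 3 = N * a ^+ 3 + b ^+ 3 +
    N * (a' - a) * ((a' ^+ 2 + a' * a + a ^+ 2) - (b ^+ 2 + b * b' + b' ^+ 2)).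
  have -> : b' = b - N * (a' - a) by lra.
  by ring.
rewrite ltrDl mulr_gt0 ?subr_gt0 //; first by rewrite mulr_gt0 // subr_gt0.
nra.
Qed.

Lemma level_params_unique n a b n' a' b' :
  0 < b <= a -> 0 < b' <= a' -> n%:R * a + b = 1 -> n'%:R * a' + b' = 1 ->
  n%:R * a ^+ 3 + b ^+ 3 = n'%:R * a' ^+ 3 + b' ^+ 3 -> n%:R * a ^+ 3 + b ^+ 3 < 1 ->
  [/\ n = n', a = a' & b = b'].
Proof.
move=> hab hab' h1 h1' e3 lt1.
have C0 : 0 < n%:R * a ^+ 3 + b ^+ 3.
  by case/andP: hab => hb hba; rewrite ltr_wpDl ?exprn_gt0 // mulr_ge0 ?exprn_ge0 //; lra.
have enn' : n = n'.
  apply: (level_unique C0); apply/andP; split.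
  - exact: level_cube_sum_lt.
  - exact: level_cube_sum_ge.
  - by rewrite e3; exact: level_cube_sum_lt.
  - by rewrite e3; exact: level_cube_sum_ge.
subst n'.
have n0 : (0 < n)%N.
  rewrite lt0n; apply: contraTneq lt1 => n0; move: h1; rewrite n0 mul0r add0r => ->.
  by rewrite mul0r add0r expr1n ltxx.
have eaa : a = a'.
  case: (ltgtP a a') => // haa.
  - by move: e3; have := level_cube_sum_increasing n0 hab hab' h1 h1' haa; lra.
  - by move: e3; have := level_cube_sum_increasing n0 hab' hab h1' h1 haa; lra.
by split=> //; move: h1 h1'; rewrite eaa; lra.
Qed.

End Levels.

Lemma exists_level_index (R : archiRealFieldType) (C : R) : 0 < C -> C < 1 ->
  exists n, [/\ (0 < n)%N, n%:R ^+ 2 * C < 1 & 1 <= n.+1%:R ^+ 2 * C].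
Proof.
move=> C0 C1.
have /ex_minnP[n hn nmin] : exists n, 1 <= n.+1%:R ^+ 2 * C :> R.
  exists (Num.Def.archi_bound C^-1).
  set K := Num.Def.archi_bound C^-1.
  have hK : C^-1 < K%:R by rewrite archi_boundP // invr_ge0 ltW.
  have hKn : K%:R <= K.+1%:R ^+ 2 :> R.
    by rewrite -natrX ler_nat (leq_trans (leqnSn K)) // expnS leq_pmulr ?expn_gt0.
  by apply: ltW; rewrite -ltr_pdivrMr // div1r (lt_le_trans hK).
case: n hn nmin => [|n] hn nmin; first by move: hn; rewrite expr1n mul1r leNgt C1.
exists n.+1; split => //; rewrite ltNge; apply/negP => /nmin.
by rewrite ltnn.
Qed.

Lemma exists_level_params (R : archiRcfType) (C : R) : 0 < C -> C < 1 ->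
  exists n (a b : R),
    [/\ 0 < b <= a, n%:R * a + b = 1 & n%:R * a ^+ 3 + b ^+ 3 = C].
Proof.
move=> C0 C1; have [n [n0 hlt hge]] := exists_level_index C0 C1.
rewrite -natr1 in hge; set N := n%:R in hlt hge *.
have N1 : 1 <= N by rewrite ler1n.
pose p := N%:P * 'X ^+ 3 + (1 - N%:P * 'X) ^+ 3.
have hp x : p.[x] = N * x ^+ 3 + (1 - N * x) ^+ 3 by rewrite !hornerE.
have hp_lo : p.[(N + 1)^-1] = ((N + 1) ^+ 2)^-1 by rewrite hp; field; lra.
have hp_hi : p.[N^-1] = (N ^+ 2)^-1 by rewrite hp; field; lra.
have [||a /andP[ha1 ha2] pa] := @poly_ivt_value R p (N + 1)^-1 N^-1 C.
- by rewrite lef_pV2 ?posrE; lra.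
- rewrite hp_lo hp_hi; apply/andP; split.
  + by rewrite -div1r ler_pdivrMr ?exprn_gt0 1?mulrC //; lra.
  + by rewrite -div1r ler_pdivlMr ?exprn_gt0 1?mulrC //; lra.
have hNa : 1 <= (N + 1) * a by rewrite -ler_pdivrMl ?mulr1 //; lra.
have hNa' : N * a < 1.
  rewrite -ltr_pdivlMl ?mulr1 ?lt_def ?ha2 ?andbT; last lra.
  apply: contraTneq hlt => ea.
  by rewrite -pa -ea hp_hi mulfV ?ltxx // expf_neq0 // gt_eqF //; lra.
by exists n, a, (1 - N * a); split; [apply/andP; split | | rewrite -hp]; lra.
Qed.

Section Minimizer.
Variable R : realType.
Local Open Scope classical_set_scope.

Lemma continuous_sum_coord k (F : R -> R) : continuous F ->
  continuous (fun c : 'rV[R]_k => \sum_(i < k) F (c ord0 i)).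
Proof.
move=> Fc.
suff sum_cont (r : seq 'I_k) :
    continuous (fun c : 'rV[R]_k => \sum_(i <- r) F (c ord0 i)) by exact: sum_cont.
elim: r => [|i r IH].
  by under eq_fun do rewrite big_nil; exact: cst_continuous.
under eq_fun do rewrite big_cons.
move=> c; apply: continuousD; last exact: IH.
apply: (@continuous_comp _ _ _ (fun c : 'rV[R]_k => c ord0 i) F); last exact: Fc.
exact: coord_continuous.
Qed.

Lemma continuous_psum_row k p : continuous (fun c : 'rV[R]_k => psum (c ord0) p).
Proof.
rewrite /psum; apply: (@continuous_sum_coord k (fun x => x ^+ p)).
exact: exprn_continuous.
Qed.

Lemma prob_vec_le1 k (w : 'I_k -> R) i : prob_vec w -> w i <= 1.
Proof.
move=> [w0 w1]; rewrite -w1 (bigD1 i) //= lerDl.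
by apply: sumr_ge0 => j _; exact: w0.
Qed.

Lemma psum1 k (w : 'I_k -> R) : psum w 1 = \sum_i w i.
Proof. by apply: eq_bigr => i _; rewrite expr1. Qed.

Lemma row_ord0 k (w : 'I_k -> R) : (\row_i w i) ord0 = w.
Proof. by apply/funext => i; rewrite mxE. Qed.

Lemma exists_psum_minimizer p q k (v : 'I_k -> R) : prob_vec v ->
  exists2 w : 'I_k -> R, prob_vec w /\ psum w p = psum v p &
    forall u : 'I_k -> R, prob_vec u -> psum u p = psum v p -> psum w q <= psum u q.
Proof.
move=> pv.
pose feasible (c : 'rV[R]_k) := prob_vec (c ord0) /\ psum (c ord0) p = psum v p.
pose box := [set c : 'rV[R]_k | forall i, `[0, 1]%classic (c ord0 i)].
pose A := box `&` ((fun c => psum (c ord0) 1) @^-1` [set 1] `&`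
                   (fun c => psum (c ord0) p) @^-1` [set psum v p]).
have feasibleA c : A c <-> feasible c.
  rewrite /A /box /= psum1; split.
  - by move=> [c01 [c1 cp]]; split; [split=> // i; case/andP: (c01 i) | ].
  - move=> [[c0 c1] cp]; split=> // i.
    by rewrite in_itv /= c0 prob_vec_le1.
have cA : compact A.
  apply: compact_closedI.
    by apply: (@rV_compact _ _ (fun=> `[(0 : R), 1]%classic)) => _; exact: segment_compact.
  by apply: closedI; apply: preimage_closed; try exact: closed_eq;
    move=> c _; exact: continuous_psum_row.
have A0 : A !=set0 by exists (\row_i v i); apply/feasibleA; rewrite /feasible row_ord0.
have [c /[!inE] /feasibleA cA' cmin] := EVT_min_rV A0 cA
  (continuous_subspaceT (@continuous_psum_row k q)).
exists (c ord0) => // u pu up.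
have := cmin (\row_i u i); rewrite row_ord0; apply.
by rewrite inE; apply/feasibleA; rewrite /feasible row_ord0.
Qed.

End Minimizer.

Lemma bigD3 (I : finType) (V : nmodType) (G : I -> V) i j l :
  i != j -> i != l -> j != l ->
  \sum_r G r = G i + G j + G l + \sum_(r | [&& r != i, r != j & r != l]) G r.
Proof.
move=> hij hil hjl.
rewrite (bigD1 i) //= (bigD1 j) /=; last by rewrite eq_sym hij.
rewrite (bigD1 l) /=; last by rewrite eq_sym hil eq_sym hjl.
by rewrite !addrA; congr (_ + _); apply: eq_bigl => r; rewrite andbA.
Qed.

Section Smoothing.
Variable R : realType.

Lemma psum4_improve k (v : 'I_k -> R) i j l :
  (forall r, 0 <= v r) -> j != l -> 0 < v j < v i -> 0 < v l < v i ->
  exists u : 'I_k -> R, [/\ forall r, 0 <= u r, \sum_r u r = \sum_r v r,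
    psum u 3 = psum v 3 & psum u 4 < psum v 4].
Proof.
move=> v0 hjl /andP[hj hji] /andP[hl hli].
have hij : i != j by apply: contraTneq hji => ->; rewrite ltxx.
have hil : i != l by apply: contraTneq hli => ->; rewrite ltxx.
have [x' [y' [z' [[hx' [hy' hz']] hs ht hp]]]] := three_point_improve hj hl hji hli.
pose u r := if r == i then x' else if r == j then y' else if r == l then z' else v r.
have sum_u (F : R -> R) : \sum_r F (u r) + F (v i) + F (v j) + F (v l) =
                          \sum_r F (v r) + F x' + F y' + F z'.
  rewrite (bigD3 (fun r => F (u r)) hij hil hjl) (bigD3 (fun r => F (v r)) hij hil hjl).
  have -> : u i = x' by rewrite /u eqxx.
  have -> : u j = y' by rewrite /u eq_sym (negbTE hij) eqxx.
  have -> : u l = z' by rewrite /u eq_sym (negbTE hil) eq_sym (negbTE hjl) eqxx.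
  under eq_bigr => r /and3P[/negbTE ri /negbTE rj /negbTE rl] do rewrite /u ri rj rl.
  lra.
exists u; split.
- by move=> r; rewrite /u; do 3 case: ifP => _ //.
- by have := sum_u id; lra.
- by have := sum_u (fun x => x ^+ 3); rewrite /psum; lra.
- by have := sum_u (fun x => x ^+ 4); rewrite /psum; lra.
Qed.

End Smoothing.

(* As seen by the power sums of positive order, w has n entries a, one entry b
   and all other entries 0. *)
Definition two_level (R : realType) k (w : 'I_k -> R) (n : nat) (a b : R) :=
  0 < b <= a /\ forall p, (0 < p)%N -> psum w p = n%:R * a ^+ p + b ^+ p.

Section TwoLevel.
Variable R : realType.

Lemma two_level_of_unique_middle k (v : 'I_k -> R) i0 :
  (forall r, 0 <= v r) -> (forall r, v r <= v i0) -> 0 < v i0 ->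
  (forall j l, 0 < v j < v i0 -> 0 < v l < v i0 -> j = l) ->
  exists n a b, two_level v n a b.
Proof.
move=> v0 vmax M0 middle1; set M := v i0 in vmax M0 middle1 *.
pose nM := #|[pred r | v r == M]|.
have psum_split p : psum v p = nM%:R * M ^+ p + \sum_(r | v r != M) v r ^+ p.
  rewrite /psum (bigID (fun r => v r == M)) /=.
  by rewrite (eq_bigr (fun=> M ^+ p)) => [|r /eqP ->]; rewrite // sumr_const mulr_natl.
case: (pickP [pred j | 0 < v j < M]) => [j0 /= hj0 | no_middle].
- exists nM, M, (v j0); split; first by case/andP: hj0 => ? /ltW ->; rewrite andbT.
  move=> p p0; rewrite psum_split; congr (_ + _).
  rewrite (bigD1 j0) /=; last by case/andP: hj0 => _ /lt_eqF ->.
  rewrite big1 ?addr0 // => r /andP[hrM hrj].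
  suff -> : v r = 0 by rewrite expr0n eqn0Ngt p0.
  apply/le_anti; rewrite v0 andbT leNgt; apply: contraNN hrj => hr.
  by apply/eqP/middle1 => //; rewrite hr /= lt_def vmax andbT eq_sym.
- have vM r : v r != M -> v r = 0.
    move=> hrM; have := no_middle r; rewrite /= [v r < M]lt_def eq_sym hrM vmax andbT.
    by rewrite andbT => hr; apply/le_anti; rewrite v0 andbT leNgt hr.
  have nM0 : (0 < nM)%N by apply/card_gt0P; exists i0; rewrite inE /=.
  exists nM.-1, M, M; split; first by rewrite M0 lexx.
  move=> p p0; rewrite psum_split big1 => [|r /vM ->]; last by rewrite expr0n eqn0Ngt p0.
  by rewrite addr0 -{1}(prednK nM0) -natr1 mulrDl mul1r.
Qed.

Lemma psum4_minimizer_two_level k (v : 'I_k -> R) : prob_vec v ->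
  (forall u : 'I_k -> R, prob_vec u -> psum u 3 = psum v 3 -> psum v 4 <= psum u 4) ->
  exists n a b, two_level v n a b.
Proof.
move=> [v0 v1] vmin.
have k0 : (0 < k)%N.
  by case: k v v0 v1 {vmin} => // v _; rewrite big_ord0 => /eqP; rewrite eq_sym oner_eq0.
pose i0 := Order.arg_max (Ordinal k0) xpredT v.
have vmax r : v r <= v i0.
  by rewrite /i0; case: (@arg_maxP _ _ _ (Ordinal k0) xpredT v) => // j _; apply.
have M0 : 0 < v i0.
  rewrite lt_neqAle v0 andbT; apply/eqP => vi0.
  move: v1; rewrite big1 => [/eqP|r _]; first by rewrite eq_sym oner_eq0.
  by apply/le_anti; rewrite v0 andbT vi0 vmax.
apply: (two_level_of_unique_middle v0 vmax M0) => j l hj hl.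
apply/eqP; apply: contraT => hjl.
have [u [u0 u1 u3 u4]] := psum4_improve v0 hjl hj hl.
by have := vmin u (conj u0 (etrans u1 v1)) u3; rewrite leNgt u4.
Qed.

Lemma two_level_unique k k' (w : 'I_k -> R) (w' : 'I_k' -> R) n a b n' a' b' :
  prob_vec w -> prob_vec w' -> two_level w n a b -> two_level w' n' a' b' ->
  psum w 3 = psum w' 3 -> psum w 3 < 1 -> [/\ n = n', a = a' & b = b'].
Proof.
move=> [_ w1] [_ w1'] [hab psw] [hab' psw'] e3 lt1.
have h1 : n%:R * a + b = 1 by move: (psw 1%N isT); rewrite psum1 w1 !expr1.
have h1' : n'%:R * a' + b' = 1 by move: (psw' 1%N isT); rewrite psum1 w1' !expr1.
rewrite psw // psw' // in e3; rewrite psw // in lt1.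
exact: level_params_unique.
Qed.

End TwoLevel.

Definition level_vec (R : realType) n (a b : R) : 'I_n.+1 -> R :=
  fun i => if (i < n)%N then a else b.
Arguments level_vec {R} n a b.

Section SpecialForm.
Variable R : realType.
Implicit Types a b : R.

Lemma sum_level_vec n a b (F : R -> R) :
  \sum_i F (level_vec n a b i) = n%:R * F a + F b.
Proof.
rewrite big_ord_recr /= /level_vec ltnn; congr (_ + _).
rewrite (eq_bigr (fun=> F a)) => [|i _]; last by rewrite /= ltn_ord.
by rewrite sumr_const card_ord mulr_natl.
Qed.

Lemma level_vec_special n a b : 0 < b <= a -> special_form (level_vec n a b).
Proof.
move=> /andP[hb hba]; split=> //; split; [|split].
- by move=> i j /= hi hj; rewrite /level_vec hi hj.
- by move=> i j /= hi hj; rewrite /level_vec hi hj ltnn.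
- by move=> j /= hj; rewrite /level_vec hj ltnn.
Qed.

Lemma level_vec_two_level n a b : 0 < b <= a -> two_level (level_vec n a b) n a b.
Proof. by split=> // p _; rewrite /psum (sum_level_vec n a b (fun x => x ^+ p)). Qed.

Lemma level_vec_prob n a b : 0 < b <= a -> n%:R * a + b = 1 -> prob_vec (level_vec n a b).
Proof.
move=> /andP[hb hba] h1; split; last by have /= -> := sum_level_vec n a b id.
by move=> i; rewrite /level_vec; case: ifP => _; lra.
Qed.

Lemma special_form_two_level m (w : 'I_m -> R) : special_form w ->
  exists n a b, m = n.+1 /\ two_level w n a b.
Proof.
case: m w => [w [] //|n w [_ [weq [wlast wpos]]]].
(* for m = 1 there is no entry a; take a := b *)
pose a := if n is n'.+1 then w ord0 else w ord_max.
have wa (i : 'I_n.+1) : (i < n)%N -> w i = a.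
  by case: n w weq {wlast wpos} @a i => // n w weq a i hi; apply: weq.
have hab : 0 < w ord_max <= a.
  rewrite wpos //=; case: n w weq wlast wpos @a wa => [|n] w _ wlast _ a _ //.
  by rewrite /a; apply: wlast.
exists n, a, (w ord_max); split=> //; split=> // p _.
rewrite /psum big_ord_recr /=; congr (_ + _).
rewrite (eq_bigr (fun=> a ^+ p)) => [|i _]; last by rewrite wa // (ltn_ord i).
by rewrite sumr_const card_ord mulr_natl.
Qed.

End SpecialForm.

Theorem lemma2p7 (R : realType) (C : R) (hC0 : 0 < C) (hC1 : C < 1) :
  exists m : nat,
    (exists w : 'I_m -> R, special_form w /\ prob_vec w /\ psum w 3 = C) /\
    (forall m' : nat, (m' < m)%N -> forall w : 'I_m' -> R,
        special_form w -> prob_vec w -> psum w 3 <> C) /\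
    (forall w : 'I_m -> R, special_form w -> prob_vec w -> psum w 3 = C ->
       forall (k : nat) (v : 'I_k -> R), prob_vec v -> psum v 3 = C ->
         psum w 4 <= psum v 4).
Proof.
have [n [a [b [hab h1 h3]]]] := exists_level_params hC0 hC1.
have [_ psw0] := level_vec_two_level n hab.
have w0C : psum (level_vec n a b) 3 = C by rewrite psw0.
have w0lt1 : psum (level_vec n a b) 3 < 1 by rewrite w0C.
exists n.+1; split; [|split].
- exists (level_vec n a b).
  by split; [exact: level_vec_special | split; [exact: level_vec_prob |]].
- move=> m' lt_m' w /special_form_two_level[n' [a' [b' [em' hw]]]] pw w3.
  have [enn' _ _] := two_level_unique (level_vec_prob hab h1) pw
    (level_vec_two_level n hab) hw (etrans w0C (esym w3)) w0lt1.
  by move: lt_m'; rewrite em' enn' ltnn.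
- move=> w /special_form_two_level[n' [a' [b' [_ hw]]]] pw w3 k v pv v3.
  have [vs [pvs vs3] vsmin] := exists_psum_minimizer 3 4 pv.
  rewrite v3 in vs3 vsmin.
  have [ns [as_ [bs hvs]]] : exists n a b, two_level vs n a b.
    by apply: psum4_minimizer_two_level => // u pu u3; apply: vsmin; rewrite ?u3.
  have wlt1 : psum w 3 < 1 by rewrite w3.
  have [en ea eb] := two_level_unique pw pvs hw hvs (etrans w3 (esym vs3)) wlt1.
  apply: le_trans (vsmin v pv v3).
  by case: hw hvs => _ psw [_ psvs]; rewrite psw // psvs // en ea eb.
Qed.
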